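(* Let $\Omega\subset\mathbb{R}^N$ be a domain with $0\in\partial\Omega$, and suppose there are $\rho,h>0$ and a $C^1$ function $\phi:\bar B_\rho(0)\subset\mathbb{R}^{N-1}\to(-h,h)$ with $\phi(0)=0$, $\nabla\phi(0)=0$, such that for $\mathcal{C}=B_\rho(0)\times(-h,h)$: $\mathcal{C}\cap\Omega=\{(x',x_N)\in\mathcal{C}:x_N<\phi(x')\}$ and $\mathcal{C}\cap\partial\Omega=\{(x',x_N)\in\mathcal{C}:x_N=\phi(x')\}$. Let $r>0$ and suppose that either (i) $\Omega$ satisfies condition $(\mathrm{L}_r)$, or (ii) $\nabla\phi$ is Lipschitz continuous with Lipschitz constant at most $\frac1r$. Then $$|\phi(x')|\le\frac{\max_{\bar B_{|x'|}(0)}|\nabla\phi|^2+1}{2r}|x'|^2\qquad\text{for all }x'\in B_\rho(0).$$ Consequently, in both cases, setting $\delta_0=\min\Big\{\frac{r}{\max_{\bar B_\rho(0)}|\nabla\phi|^2+1},\rho,\frac h2\Big\}$, one has $B_{\delta_0}((0,-\delta_0))\subset\Omega$ and $B_{\delta_0}((0,\delta_0))\subset\mathbb{R}^N\setminus\bar\Omega$ (two-sided supporting balls of radius $\delta_0$ at $0$).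
   Context: A domain is an open connected set; balls are open Euclidean balls; points of $\mathbb{R}^N$ are written $(x',x_N)$ with $x'\in\mathbb{R}^{N-1}$. $C^1$ regularity of $\partial\Omega$: for every $x_0\in\partial\Omega$ there exist $\rho,h>0$, a rigid map $T$ (rotation composed with translation) with $T(x_0)=0$, and a $C^1$ function $\phi:\bar B_\rho(0)\to(-h,h)$, $\phi(0)=0$, $\nabla\phi(0)=0$, with $\mathcal{C}\cap T(\Omega)=\{x_N<\phi(x')\}$ and $\mathcal{C}\cap T(\partial\Omega)=\{x_N=\phi(x')\}$ in $\mathcal{C}=B_\rho(0)\times(-h,h)$; then the outward unit normal $\vec n$ on $\partial\Omega$ is well defined. Condition $(\mathrm{L}_r)$: $\partial\Omega$ is $C^1$ regular and $|\vec n(x_0)-\vec n(y_0)|\le\frac1r|x_0-y_0|$ for all $x_0,y_0\in\partial\Omega$. *)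

From HB Require Import structures.
From mathcomp Require Import all_boot all_order all_algebra.
From mathcomp Require Import all_classical all_reals all_analysis.
Set Implicit Arguments. Unset Strict Implicit. Unset Printing Implicit Defensive.
Import Order.TTheory GRing.Theory Num.Theory.
Import numFieldNormedType.Exports.
Local Open Scope classical_set_scope.
Local Open Scope ring_scope.

Section Defs.
Variable R : realType.

Definition enorm k (v : 'rV[R]_k) : R := Num.sqrt (\sum_(i < k) (v 0 i) ^+ 2).

Definition eball k (c : 'rV[R]_k) (s : R) : set 'rV[R]_k := [set x | enorm (x - c) < s].
Definition cball k (c : 'rV[R]_k) (s : R) : set 'rV[R]_k := [set x | enorm (x - c) <= s].

Definition bd k (A : set 'rV[R]_k) : set 'rV[R]_k := closure A `\` interior A.

Definition xp n (y : 'rV[R]_(n + 1)) : 'rV[R]_n := lsubmx y.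
Definition xN n (y : 'rV[R]_(n + 1)) : R := rsubmx y 0 0.
Definition pt n (x' : 'rV[R]_n) (t : R) : 'rV[R]_(n + 1) := row_mx x' (const_mx t).

Definition cyl n (rho h : R) : set 'rV[R]_(n + 1) :=
  [set y | enorm (xp y) < rho /\ - h < xN y < h].

Definition grad_at n (f : 'rV[R]_n -> R) (x g : 'rV[R]_n) : Prop :=
  differentiable f x /\ forall v, 'd f x v = \sum_(i < n) g 0 i * v 0 i.

(* f is C^1 on the closed ball cball 0 rho, with gradient G (G is the
   gradient in the open ball, extended continuously to the closed ball). *)
Definition C1_cball n (rho : R) (f : 'rV[R]_n -> R) (G : 'rV[R]_n -> 'rV[R]_n) : Prop :=
  {within cball 0 rho, continuous f} /\
  {within cball 0 rho, continuous G} /\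
  (forall x, enorm x < rho -> grad_at f x (G x)).

Definition graph_chart n (A Bd : set 'rV[R]_(n + 1)) (rho h : R)
    (f : 'rV[R]_n -> R) (G : 'rV[R]_n -> 'rV[R]_n) : Prop :=
  0 < rho /\ 0 < h /\ C1_cball rho f G /\
  (forall x', enorm x' <= rho -> - h < f x' < h) /\
  f 0 = 0 /\ G 0 = 0 /\
  (forall y, cyl rho h y -> (A y <-> xN y < f (xp y))) /\
  (forall y, cyl rho h y -> (Bd y <-> xN y = f (xp y))).

(* Rotations (row-vector convention: x |-> x *m Q). *)
Definition rotation k (Q : 'M[R]_k) : Prop := Q *m Q^T = 1%:M /\ \det Q = 1.

Definition eN n : 'rV[R]_(n + 1) := pt 0 1.

(* C^1 chart of Omega at x0 via the rigid map T x = (x - x0) *m Q, with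
   outward unit normal nu at x0 (in the chart, the outward normal at 0 is e_N,
   hence nu = e_N Q^T in original coordinates). *)
Definition C1_chart_at n (Omega : set 'rV[R]_(n + 1)) (x0 nu : 'rV[R]_(n + 1)) : Prop :=
  exists (rho h : R) (Q : 'M[R]_(n + 1)) (f : 'rV[R]_n -> R) (G : 'rV[R]_n -> 'rV[R]_n),
    rotation Q /\
    graph_chart ((fun x => (x - x0) *m Q) @` Omega)
                ((fun x => (x - x0) *m Q) @` bd Omega) rho h f G /\
    nu = eN n *m Q^T.

Definition cond_L n (r : R) (Omega : set 'rV[R]_(n + 1)) : Prop :=
  exists nu : 'rV[R]_(n + 1) -> 'rV[R]_(n + 1),
    (forall x0, bd Omega x0 -> C1_chart_at Omega x0 (nu x0)) /\
    (forall x0 y0, bd Omega x0 -> bd Omega y0 ->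
       enorm (nu x0 - nu y0) <= enorm (x0 - y0) / r).

(* max over the closed ball of radius s of |G|^2 (attained, as G is
   continuous on the compact ball; written as a supremum). *)
Definition gmax2 n (G : 'rV[R]_n -> 'rV[R]_n) (s : R) : R :=
  sup [set enorm (G y) ^+ 2 | y in cball 0 s].

End Defs.

From HB Require Import structures.
From mathcomp Require Import all_boot all_order all_algebra.
From mathcomp Require Import all_classical all_reals all_analysis.
From mathcomp Require Import ring lra.
Set Implicit Arguments. Unset Strict Implicit. Unset Printing Implicit Defensive.
Import Order.TTheory GRing.Theory Num.Theory.
Import numFieldNormedType.Exports.
Local Open Scope classical_set_scope.
Local Open Scope ring_scope.

(* Along the ray t |-> t x' the derivative of phi is G (t x') . x', so the
   quadratic bound follows from the linear growth bound |G z| r <= (M + 1) |z|,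
   M = max |G|^2 on the ball of radius |x'|, by comparing phi (t x') with
   ((M + 1) / r) |x'|^2 t^2 / 2 through the mean value theorem.  Under (ii)
   the growth bound is the Lipschitz bound on G with G 0 = 0.  Under (L_r) the
   outward normal at (z, phi z) is forced to be N(G z), where N = graph_normal,
   N(g) = (-g, 1) / sqrt (1 + |g|^2): a different unit normal would make the
   points just beyond the boundary point in some direction lie both inside
   Omega (second chart) and outside it (graph chart).  Then
   |g|^2 <= (1 + |g|^2) |N(g) - N(0)|^2 and |(z, phi z)|^2 <= (1 + M) |z|^2
   turn the (1/r)-Lipschitz bound on the normal into the same growth bound.
   Finally, on the ball of radius delta0 the quadratic bound reads
   |phi y'| 2 delta0 <= |y'|^2, which puts the ball of radius delta0 centred at
   (0, -delta0) below the graph, hence in Omega, and the one centred at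
   (0, delta0) above it, hence outside the closure. *)

Section Euclidean.
Variable R : realType.
Implicit Types k : nat.

Definition dot k (u v : 'rV[R]_k) : R := \sum_(i < k) u 0 i * v 0 i.

Lemma dotC k (u v : 'rV[R]_k) : dot u v = dot v u.
Proof. by apply: eq_bigr => i _; rewrite mulrC. Qed.

Lemma dotDl k (u v w : 'rV[R]_k) : dot (u + v) w = dot u w + dot v w.
Proof. by rewrite /dot -big_split; apply: eq_bigr => i _; rewrite mxE mulrDl. Qed.

Lemma dotNl k (u v : 'rV[R]_k) : dot (- u) v = - dot u v.
Proof. by rewrite /dot -sumrN; apply: eq_bigr => i _; rewrite mxE mulNr. Qed.

Lemma dotZl k a (u v : 'rV[R]_k) : dot (a *: u) v = a * dot u v.
Proof. by rewrite /dot mulr_sumr; apply: eq_bigr => i _; rewrite mxE mulrA. Qed.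

Lemma dotBl k (u v w : 'rV[R]_k) : dot (u - v) w = dot u w - dot v w.
Proof. by rewrite dotDl dotNl. Qed.

Lemma dotBr k (u v w : 'rV[R]_k) : dot w (u - v) = dot w u - dot w v.
Proof. by rewrite dotC dotBl !(dotC w). Qed.

Lemma dotZr k a (u v : 'rV[R]_k) : dot v (a *: u) = a * dot v u.
Proof. by rewrite dotC dotZl dotC. Qed.

Lemma dotNr k (u v : 'rV[R]_k) : dot u (- v) = - dot u v.
Proof. by rewrite dotC dotNl dotC. Qed.

Lemma dot0l k (u : 'rV[R]_k) : dot 0 u = 0.
Proof. by rewrite /dot big1 // => i _; rewrite mxE mul0r. Qed.

Lemma dotvv_ge0 k (u : 'rV[R]_k) : 0 <= dot u u.
Proof. by apply: sumr_ge0 => i _; rewrite -expr2 sqr_ge0. Qed.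

Lemma dotvv_eq0 k (u : 'rV[R]_k) : (dot u u == 0) = (u == 0).
Proof.
apply/eqP/eqP => [uu0|->]; last exact: dot0l.
apply/rowP => i; rewrite mxE; apply/eqP; rewrite -sqrf_eq0 expr2.
have /psumr_eq0P uu0i : \sum_(j < k) u 0 j * u 0 j = 0 := uu0.
by rewrite uu0i // => j _; rewrite -expr2 sqr_ge0.
Qed.

Lemma dot_mulmx k (u v : 'rV[R]_k) (Q : 'M[R]_k) : dot (u *m Q) v = dot u (v *m Q^T).
Proof.
have dotE (x y : 'rV[R]_k) : dot x y = (x *m y^T) 0 0.
  by rewrite mxE; apply: eq_bigr => i _; rewrite mxE.
by rewrite !dotE trmx_mul trmxK mulmxA.
Qed.

Lemma CauchySchwarz_dot k (u v : 'rV[R]_k) : dot u v ^+ 2 <= dot u u * dot v v.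
Proof.
have [/eqP|vv0] := eqVneq (dot v v) 0.
  by rewrite dotvv_eq0 => /eqP->; rewrite dotC !dot0l expr0n mulr0.
have vv_gt0 : 0 < dot v v by rewrite lt_def vv0 dotvv_ge0.
have := dotvv_ge0 (dot v v *: u - dot u v *: v).
by rewrite !dotBl !dotBr !dotZl !dotZr (dotC v u); nra.
Qed.

Lemma sqr_enorm k (u : 'rV[R]_k) : enorm u ^+ 2 = dot u u.
Proof.
rewrite /enorm sqr_sqrtr; last by apply: sumr_ge0 => i _; rewrite sqr_ge0.
by apply: eq_bigr => i _; rewrite expr2.
Qed.

Lemma enorm_ge0 k (u : 'rV[R]_k) : 0 <= enorm u.
Proof. exact: sqrtr_ge0. Qed.

Lemma enorm0 k : enorm (0 : 'rV[R]_k) = 0.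
Proof. by apply/eqP; rewrite -sqrf_eq0 sqr_enorm dot0l. Qed.

Lemma enormZ k a (u : 'rV[R]_k) : enorm (a *: u) = `|a| * enorm u.
Proof.
apply: (@pexpIrn _ 2) => //; rewrite ?nnegrE ?mulr_ge0 ?enorm_ge0 //.
by rewrite exprMn real_normK ?num_real // !sqr_enorm dotZl dotZr mulrA.
Qed.

Lemma enormN k (u : 'rV[R]_k) : enorm (- u) = enorm u.
Proof. by rewrite -scaleN1r enormZ normrN normr1 mul1r. Qed.

Lemma ler_abs_dot k (u v : 'rV[R]_k) : `|dot u v| <= enorm u * enorm v.
Proof.
rewrite -ler_sqr ?nnegrE ?mulr_ge0 ?enorm_ge0 //.
by rewrite real_normK ?num_real // exprMn !sqr_enorm CauchySchwarz_dot.
Qed.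

Lemma dot_unit_lt1 k (u v : 'rV[R]_k) :
  dot u u = 1 -> dot v v = 1 -> u != v -> dot u v < 1.
Proof.
move=> uu vv uv; have : 0 < dot (u - v) (u - v).
  by rewrite lt_def dotvv_eq0 subr_eq0 uv dotvv_ge0.
by rewrite !dotBl !dotBr uu vv (dotC v u); lra.
Qed.

End Euclidean.

Section Coordinates.
Variables (R : realType) (n : nat).
Implicit Types (a b x : 'rV[R]_n) (c s t : R).

Lemma xp_pt x t : xp (pt x t) = x.
Proof. by rewrite /xp /pt row_mxKl. Qed.

Lemma xN_pt x t : xN (pt x t) = t.
Proof. by rewrite /xN /pt row_mxKr mxE. Qed.

Lemma pt_xp (y : 'rV[R]_(n + 1)) : pt (xp y) (xN y) = y.
Proof.
rewrite /pt /xp /xN -[RHS]hsubmxK; congr row_mx.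
by apply/matrixP => i j; rewrite !ord1 mxE.
Qed.

Lemma dot_pt a b s t : dot (pt a s) (pt b t) = dot a b + s * t.
Proof.
rewrite /dot big_split_ord /= big_ord1; congr (_ + _).
  by apply: eq_bigr => i _; rewrite !row_mxEl.
by rewrite !row_mxEr !mxE.
Qed.

Lemma dot_pt_opp (w : 'rV[R]_(n + 1)) g : dot w (pt (- g) 1) = xN w - dot g (xp w).
Proof. by rewrite -{1}[w]pt_xp dot_pt dotNr mulr1 dotC addrC. Qed.

Lemma sqr_enorm_pt a s : enorm (pt a s) ^+ 2 = enorm a ^+ 2 + s ^+ 2.
Proof. by rewrite !sqr_enorm dot_pt expr2. Qed.

Lemma ptD a b s t : pt a s + pt b t = pt (a + b) (s + t).
Proof. by rewrite /pt add_row_mx; congr row_mx; apply/matrixP => i j; rewrite !mxE. Qed.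

Lemma ptZ c a s : c *: pt a s = pt (c *: a) (c * s).
Proof. by rewrite /pt scale_row_mx; congr row_mx; apply/matrixP => i j; rewrite !mxE. Qed.

Lemma ptB a b s t : pt a s - pt b t = pt (a - b) (s - t).
Proof. by rewrite -scaleN1r ptZ !scaleN1r mulN1r ptD. Qed.

Lemma pt0 : pt (0 : 'rV[R]_n) 0 = 0.
Proof. by apply/rowP => i; rewrite /pt mxE; case: splitP => j _; rewrite !mxE. Qed.

End Coordinates.

Section Compactness.
Variable R : realType.
Implicit Types k : nat.

Lemma continuous_enorm k : continuous (@enorm R k).
Proof.
have sum_sqr_cont : continuous (fun v : 'rV[R]_k => \sum_(i < k) v 0 i ^+ 2).
  apply: (@continuous_big R _ +%R 0 xpredT add_continuous _ (index_enum _)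
    (fun i (v : 'rV[R]_k) => v 0 i ^+ 2)) => i _ v.
  apply: (continuous_comp (f := fun v : 'rV[R]_k => v 0 i) (g := fun x : R => x ^+ 2)).
    exact: coord_continuous.
  exact: exprn_continuous.
by move=> v; have := continuous_comp (sum_sqr_cont v) (@sqrt_continuous R _); exact.
Qed.

Lemma mx_norm_le_enorm k (u : 'rV[R]_k) : `|u| <= enorm u.
Proof.
rewrite /Num.norm /= mx_normrE; apply: bigmax_le; first exact: enorm_ge0.
move=> [i j] _ /=; rewrite (ord1 i) -ler_sqr ?nnegrE ?enorm_ge0 //.
rewrite real_normK ?num_real // sqr_enorm /dot (bigD1 j) //= expr2 lerDl.
by apply: sumr_ge0 => l _; rewrite -expr2 sqr_ge0.
Qed.

Lemma cball0E k (s : R) (y : 'rV[R]_k) : cball 0 s y = (enorm y <= s).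
Proof. by rewrite /cball /= subr0. Qed.

Lemma compact_cball k s : compact (cball (0 : 'rV[R]_k) s).
Proof.
have cballE : cball (0 : 'rV[R]_k) s = @enorm R k @^-1` [set x | x <= s].
  by apply/funext => y; rewrite cball0E.
apply: bounded_closed_compact.
  exists s; split; first exact: num_real.
  move=> M sM y; rewrite cballE /= => ys.
  by apply: le_trans (mx_norm_le_enorm y) (le_trans ys (ltW sM)).
by rewrite cballE; apply: preimage_closed (@closed_le _ _) => y _; exact: continuous_enorm.
Qed.

End Compactness.

Section SupremumOfGradient.
Variables (R : realType) (n : nat) (rho : R) (G : 'rV[R]_n -> 'rV[R]_n).
Hypothesis G_cont : {within cball 0 rho, continuous G}.

Lemma has_sup_gmax2 (s : R) : 0 <= s -> s <= rho ->
  has_sup [set enorm (G y) ^+ 2 | y in cball 0 s].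
Proof.
move=> s0 srho; apply: compact_has_sup.
  by exists (enorm (G 0) ^+ 2), 0; rewrite // cball0E enorm0.
rewrite -(image_comp G (fun v => enorm v ^+ 2)).
apply: continuous_compact.
  apply: continuous_subspaceT => v.
  apply: (continuous_comp (f := @enorm R n) (g := fun x : R => x ^+ 2)).
    exact: continuous_enorm.
  exact: exprn_continuous.
apply: continuous_compact; last exact: compact_cball.
by apply: continuous_subspaceW G_cont => y; rewrite !cball0E => /le_trans; apply.
Qed.

Lemma gmax2_ub (s : R) y : 0 <= s -> s <= rho -> enorm y <= s -> enorm (G y) ^+ 2 <= gmax2 G s.
Proof.
move=> s0 srho ys; apply: sup_upper_bound (has_sup_gmax2 s0 srho) _ _.
by exists y; rewrite ?cball0E.
Qed.

Lemma gmax2_ge0 (s : R) : 0 <= s -> s <= rho -> 0 <= gmax2 G s.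
Proof.
by move=> s0 srho; apply: le_trans (sqr_ge0 _) (gmax2_ub (y := 0) s0 srho _); rewrite enorm0.
Qed.

Lemma le_gmax2 (s t : R) : 0 <= s -> s <= t -> t <= rho -> gmax2 G s <= gmax2 G t.
Proof.
move=> s0 st trho; apply: ge_sup.
  by exists (enorm (G 0) ^+ 2), 0; rewrite ?cball0E ?enorm0.
move=> _ [y ys <-]; apply: gmax2_ub (le_trans s0 st) trho _.
by rewrite cball0E in ys; apply: le_trans ys st.
Qed.

End SupremumOfGradient.

Section MeanValue.
Variable R : realType.

Lemma ler_abs_increment (F Q F' Q' : R -> R) (a b : R) : a < b ->
  (forall x, a <= x <= b -> is_derive x 1 F (F' x)) ->
  (forall x, a <= x <= b -> is_derive x 1 Q (Q' x)) ->
  (forall x, a < x < b -> `|F' x| <= Q' x) ->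
  `|F b - F a| <= Q b - Q a.
Proof.
move=> ab dF dQ FQ.
have mvt (H H' : R -> R) : (forall x, a <= x <= b -> is_derive x 1 H (H' x)) ->
    exists2 c, a < c < b & H b - H a = H' c * (b - a).
  move=> dH.
  have dH' x : x \in `]a, b[ -> is_derive x 1 H (H' x).
    by rewrite in_itv /= => /andP[ax xb]; apply: dH; rewrite !ltW.
  have cH : {within `[a, b], continuous H}.
    by apply: derivable_within_continuous => x; rewrite in_itv /= => /dH [].
  by have [c] := MVT ab dH' cH; rewrite in_itv /=; exists c.
have [c /FQ Fc E1] := mvt (fun x => F x - Q x) (fun x => F' x - Q' x)
  (fun x xab => is_deriveB (dF x xab) (dQ x xab)).
have [d /FQ Fd E2] := mvt (fun x => F x + Q x) (fun x => F' x + Q' x)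
  (fun x xab => is_deriveD (dF x xab) (dQ x xab)).
move: Fc Fd; rewrite !ler_norml => /andP[c1 c2] /andP[d1 d2].
have ba : 0 < b - a by rewrite subr_gt0.
have P1 : 0 <= (Q' c - F' c) * (b - a) by apply: mulr_ge0; [rewrite subr_ge0 | exact: ltW].
have P2 : 0 <= (F' d + Q' d) * (b - a) by apply: mulr_ge0; [lra | exact: ltW].
by apply/andP; split; lra.
Qed.

End MeanValue.

Section GradientAlongSegments.
Variables (R : realType) (n : nat).

Lemma is_derive_quadratic (c d t : R) :
  is_derive t 1 (fun s : R => c / 2 * s ^+ 2 + d * s) (c * t + d).
Proof.
have -> : (fun s : R => c / 2 * s ^+ 2 + d * s) = (c / 2) \*: (@id R) ^+ 2 + d \*: (@id R).
  by apply/funext.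
apply: is_derive_eq; rewrite expr1.
by change (c / 2 * (2 * t * 1) + d * 1 = c * t + d); rewrite !mulr1; field.
Qed.

Lemma grad_at_derive (f : 'rV[R]_n -> R) x g v : grad_at f x g -> 'D_v f x = dot g v.
Proof. by move=> [df dfE]; rewrite deriveE // dfE. Qed.

Lemma is_derive_along_ray (f : 'rV[R]_n -> R) (z : 'rV[R]_n) t :
  derivable f (t *: z) z -> is_derive t 1 (fun s => f (s *: z)) ('D_z f (t *: z)).
Proof.
move=> df.
have quotE : (fun h : R => h^-1 *: (((fun s => f (s *: z)) \o shift t) (h *: 1) - f (t *: z)))
    = (fun h => h^-1 *: ((f \o shift (t *: z)) (h *: z) - f (t *: z))).
  by apply/funext => h /=; rewrite scaler1 scalerDl.
by apply: DeriveDef; [rewrite /derivable quotE | rewrite /derive quotE].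
Qed.

Lemma ler_abs_increment_segment (f : 'rV[R]_n -> R) G rho z (c d : R) :
  (forall x, enorm x < rho -> grad_at f x (G x)) -> enorm z < rho ->
  (forall t, 0 < t < 1 -> `|dot (G (t *: z)) z| <= c * t + d) ->
  `|f z - f 0| <= c / 2 + d.
Proof.
move=> gradf zr bound.
have dF (t : R) : 0 <= t <= 1 -> is_derive t 1 (fun s => f (s *: z)) (dot (G (t *: z)) z).
  move=> /andP[t0 t1].
  have tzr : enorm (t *: z) < rho.
    by rewrite enormZ ger0_norm //; have := enorm_ge0 z; nra.
  rewrite -(grad_at_derive z (gradf _ tzr)).
  exact/is_derive_along_ray/diff_derivable/(gradf _ tzr).1.
have := ler_abs_increment ltr01 dF (fun t _ => is_derive_quadratic c d t) bound.
rewrite scale1r scale0r => /le_trans; apply.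
by rewrite expr1n expr0n /= !mulr1 !mulr0 addr0 subr0.
Qed.

End GradientAlongSegments.

Lemma cvg_ray_at_right (R : realType) (V : normedModType R) (x v : V) :
  x + t *: v @[t --> (0 : R)^'+] --> x.
Proof.
apply: cvg_at_right_filter.
have : x + t *: v @[t --> (0 : R)] --> x + 0 *: v.
  by apply: cvgD; [exact: cvg_cst | exact: scalel_continuous].
by rewrite scale0r addr0.
Qed.

Section GraphChartDirections.
Variables (R : realType) (n : nat) (A Bd : set 'rV[R]_(n + 1)) (rho h : R).
Variables (f : 'rV[R]_n -> R) (G : 'rV[R]_n -> 'rV[R]_n).
Hypothesis chart : graph_chart A Bd rho h f G.

Lemma graph_chart_near_ray z w : enorm z < rho ->
  \forall t \near 0^'+,
    A (pt z (f z) + t *: w) <-> f z + t * xN w < f (t *: xp w + z).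
Proof.
move=> zr; have [_ [_ [_ [fbd [_ [_ [Asub _]]]]]]] := chart.
have /andP[fzl fzu] := fbd z (ltW zr).
have near_z : enorm (z + t *: xp w) @[t --> 0^'+] --> enorm z.
  apply: (@cvg_comp _ _ _ (fun t : R => z + t *: xp w) (@enorm R n)).
    exact: cvg_ray_at_right.
  exact: continuous_enorm.
have near_fz : f z + t * xN w @[t --> 0^'+] --> f z := cvg_ray_at_right (x := f z) (xN w).
near=> t.
have -> : pt z (f z) + t *: w = pt (z + t *: xp w) (f z + t * xN w).
  by rewrite -{1}[w]pt_xp ptZ ptD.
have cyl_t : cyl rho h (pt (z + t *: xp w) (f z + t * xN w)).
  rewrite /cyl /= xp_pt xN_pt; split; first by near: t; exact: cvgr_lt near_z _ zr.
  apply/andP; split; first by near: t; exact: cvgr_gt near_fz _ fzl.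
  by near: t; exact: cvgr_lt near_fz _ fzu.
by rewrite (propext (Asub _ cyl_t)) xp_pt xN_pt (addrC z).
Unshelve. all: by end_near.
Qed.

Lemma graph_chart_quotient z v : enorm z < rho ->
  t^-1 * (f (t *: v + z) - f z) @[t --> 0^'+] --> dot (G z) v.
Proof.
move=> zr; have [_ [_ [[_ [_ gradf]] _]]] := chart.
rewrite -(grad_at_derive v (gradf z zr)); apply: cvg_dnbhs_at_right.
by have := diff_derivable (v := v) (gradf z zr).1; exact.
Qed.

Lemma graph_chart_inward z w : enorm z < rho -> dot w (pt (- G z) 1) < 0 ->
  \forall t \near 0^'+, A (pt z (f z) + t *: w).
Proof.
rewrite dot_pt_opp subr_lt0 => zr wG.
near=> t.
have t0 : 0 < t by near: t; exact: nbhs_right_gt.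
have ray : A (pt z (f z) + t *: w) <-> f z + t * xN w < f (t *: xp w + z).
  by near: t; exact: graph_chart_near_ray.
apply/ray.
have : xN w < t^-1 * (f (t *: xp w + z) - f z).
  by near: t; exact: cvgr_gt (graph_chart_quotient (v := xp w) zr) _ wG.
by rewrite ltr_pdivlMl //; lra.
Unshelve. all: by end_near.
Qed.

Lemma graph_chart_outward z w : enorm z < rho -> 0 < dot w (pt (- G z) 1) ->
  \forall t \near 0^'+, ~ A (pt z (f z) + t *: w).
Proof.
rewrite dot_pt_opp subr_gt0 => zr wG.
near=> t.
have t0 : 0 < t by near: t; exact: nbhs_right_gt.
have ray : A (pt z (f z) + t *: w) <-> f z + t * xN w < f (t *: xp w + z).
  by near: t; exact: graph_chart_near_ray.
move/ray.
have : t^-1 * (f (t *: xp w + z) - f z) < xN w.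
  by near: t; exact: cvgr_lt (graph_chart_quotient (v := xp w) zr) _ wG.
by rewrite ltr_pdivrMl //; lra.
Unshelve. all: by end_near.
Qed.

Lemma graph_chart_bd z : enorm z < rho -> Bd (pt z (f z)).
Proof.
move=> zr; have [_ [_ [_ [fbd [_ [_ [_ Bdsub]]]]]]] := chart.
have cyl_z : cyl rho h (pt z (f z)).
  by rewrite /cyl /= xp_pt xN_pt; split => //; exact: fbd (ltW zr).
by apply/(Bdsub _ cyl_z); rewrite xp_pt xN_pt.
Qed.

End GraphChartDirections.

Section GraphNormal.
Variables (R : realType) (n : nat).

Lemma sqrt1Dsqr_gt0 (x : R) : 0 < Num.sqrt (1 + x ^+ 2).
Proof. by rewrite sqrtr_gt0 ltr_pwDl ?sqr_ge0. Qed.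

Lemma sqr_sqrt1Dsqr (x : R) : Num.sqrt (1 + x ^+ 2) ^+ 2 = 1 + x ^+ 2.
Proof. by rewrite sqr_sqrtr // addr_ge0 ?sqr_ge0. Qed.

Definition graph_normal (g : 'rV[R]_n) : 'rV[R]_(n + 1) :=
  (Num.sqrt (1 + enorm g ^+ 2))^-1 *: pt (- g) 1.

Lemma pt_graph_normal g : pt (- g) 1 = Num.sqrt (1 + enorm g ^+ 2) *: graph_normal g.
Proof. by rewrite scalerA mulfV ?scale1r // gt_eqF // sqrt1Dsqr_gt0. Qed.

Lemma graph_normal_unit g : dot (graph_normal g) (graph_normal g) = 1.
Proof.
rewrite dotZl dotZr dot_pt dotNl dotNr opprK mulr1 mulrA -expr2 exprVn.
by rewrite -sqr_enorm (addrC (enorm g ^+ 2)) sqr_sqrt1Dsqr mulVf // gt_eqF // ltr_pwDl ?sqr_ge0.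
Qed.

Lemma graph_normal0 : graph_normal 0 = eN R n.
Proof. by rewrite /graph_normal enorm0 expr0n addr0 sqrtr1 invr1 scale1r oppr0. Qed.

Lemma sqr_enorm_graph_normalB g :
  enorm g ^+ 2 <= (1 + enorm g ^+ 2) * enorm (graph_normal g - graph_normal 0) ^+ 2.
Proof.
set s := Num.sqrt (1 + enorm g ^+ 2).
have s_gt0 : 0 < s := sqrt1Dsqr_gt0 _.
rewrite -(sqr_sqrt1Dsqr (enorm g)) -/s graph_normal0 /graph_normal -/s.
rewrite /eN ptZ ptB subr0 mulr1 sqr_enorm_pt enormZ enormN ger0_norm; last by rewrite invr_ge0 ltW.
have -> : s ^+ 2 * ((s^-1 * enorm g) ^+ 2 + (s^-1 - 1) ^+ 2) = enorm g ^+ 2 + (1 - s) ^+ 2.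
  by field; rewrite gt_eqF.
by rewrite lerDl sqr_ge0.
Qed.

Lemma C1_chart_at_graph_normal (Omega : set 'rV[R]_(n + 1)) rho h phi G z nu :
  graph_chart Omega (bd Omega) rho h phi G -> enorm z < rho ->
  C1_chart_at Omega (pt z (phi z)) nu -> nu = graph_normal (G z).
Proof.
move=> chart zr [rho' [h' [Q [f [G' [[QQt _] [chart' nuE]]]]]]].
have [rho'_gt0 [_ [_ [_ [f0 [G'0 _]]]]]] := chart'.
set m := graph_normal (G z).
have nu_unit : dot nu nu = 1.
  by rewrite nuE dot_mulmx trmxK -mulmxA (mulmx1C QQt) mulmx1 -graph_normal0 graph_normal_unit.
apply/eqP; apply: contraT => nu_neq_m.
have nu_m := dot_unit_lt1 nu_unit (graph_normal_unit (G z)) nu_neq_m.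
have outside : \forall t \near 0^'+, ~ Omega (pt z (phi z) + t *: (m - nu)).
  apply: (graph_chart_outward chart zr).
  by rewrite pt_graph_normal dotZr mulr_gt0 ?sqrt1Dsqr_gt0 // dotBl graph_normal_unit subr_gt0.
have zero_in : enorm (0 : 'rV[R]_n) < rho' by rewrite enorm0.
have nu_in : dot ((m - nu) *m Q) (pt (- G' 0) 1) < 0.
  by rewrite G'0 oppr0 dot_mulmx -/(eN R n) -nuE dotBl nu_unit subr_lt0 dotC.
have inside := graph_chart_inward chart' zero_in nu_in.
have [t [notO [x Ox xE]]] := filter_ex (filterI outside inside).
suff xE' : pt z (phi z) + t *: (m - nu) = x by case: notO; rewrite xE'.
have : (x - pt z (phi z)) *m Q *m Q^T = (t *: (m - nu)) *m Q *m Q^T.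
  by rewrite xE f0 pt0 add0r scalemxAl.
by rewrite -!mulmxA QQt !mulmx1 => <-; rewrite addrC subrK.
Qed.

End GraphNormal.

Section GradientGrowth.
Variables (R : realType) (n : nat) (Omega : set 'rV[R]_(n + 1)) (rho h r : R).
Variables (phi : 'rV[R]_n -> R) (G : 'rV[R]_n -> 'rV[R]_n) (z : 'rV[R]_n) (M : R).
Hypotheses (chart : graph_chart Omega (bd Omega) rho h phi G) (r_gt0 : 0 < r).
Hypotheses (zr : enorm z < rho)
  (GM : forall y, enorm y <= enorm z -> enorm (G y) ^+ 2 <= M).

Let M_ge0 : 0 <= M.
Proof. by apply: le_trans (sqr_ge0 _) (GM (y := 0) _); rewrite enorm0 enorm_ge0. Qed.

Lemma ler_abs_graph : `|phi z| <= Num.sqrt M * enorm z.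
Proof.
have [_ [_ [[_ [_ gradphi]] [_ [phi0 _]]]]] := chart.
have := ler_abs_increment_segment (c := 0) (d := Num.sqrt M * enorm z) gradphi zr.
rewrite phi0 subr0 mul0r add0r; apply => t /andP[t0 t1].
rewrite mul0r add0r; apply: le_trans (ler_abs_dot _ _) _.
rewrite ler_wpM2r ?enorm_ge0 // -(ger0_norm (enorm_ge0 (G _))) -sqrtr_sqr ler_sqrt //.
by apply: GM; rewrite enormZ ger0_norm ?(ltW t0) //; have := enorm_ge0 z; nra.
Qed.

Lemma grad_growth_of_normal_lipschitz :
  cond_L r Omega -> enorm (G z) * r <= (M + 1) * enorm z.
Proof.
move=> [nu [nu_chart nu_lip]].
have [rho_gt0 [_ [_ [_ [phi0 [G0 _]]]]]] := chart.
have zero_in : enorm (0 : 'rV[R]_n) < rho by rewrite enorm0.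
have bdZ := graph_chart_bd chart zr; have bd0 := graph_chart_bd chart zero_in.
have := nu_lip _ _ bdZ bd0.
rewrite (C1_chart_at_graph_normal chart zr (nu_chart _ bdZ)).
rewrite (C1_chart_at_graph_normal chart zero_in (nu_chart _ bd0)) G0 phi0 pt0 subr0.
rewrite ler_pdivlMr // => Lr.
set L := enorm (graph_normal (G z) - graph_normal 0) in Lr.
have Z2 : enorm (pt z (phi z)) ^+ 2 <= (1 + M) * enorm z ^+ 2.
  rewrite sqr_enorm_pt mulrDl mul1r lerD2l -real_normK ?num_real //.
  have := ler_abs_graph; rewrite -ler_sqr ?nnegrE ?mulr_ge0 ?enorm_ge0 ?sqrtr_ge0 //.
  by rewrite exprMn sqr_sqrtr.
have LrZ : (L * r) ^+ 2 <= (1 + M) * enorm z ^+ 2.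
  apply: le_trans Z2; rewrite ler_sqr ?nnegrE ?mulr_ge0 ?enorm_ge0 ?(ltW r_gt0) //.
have step1 : enorm (G z) ^+ 2 * r ^+ 2 <= (1 + enorm (G z) ^+ 2) * L ^+ 2 * r ^+ 2.
  by rewrite ler_pM2r ?exprn_gt0 // sqr_enorm_graph_normalB.
have step2 : (1 + enorm (G z) ^+ 2) * L ^+ 2 * r ^+ 2 <= (1 + M) * ((1 + M) * enorm z ^+ 2).
  by rewrite -mulrA -exprMn; apply: ler_pM; rewrite ?addr_ge0 ?sqr_ge0 ?lerD2l ?GM.
rewrite -ler_sqr ?nnegrE ?mulr_ge0 ?enorm_ge0 ?addr_ge0 ?(ltW r_gt0) //.
have -> : ((M + 1) * enorm z) ^+ 2 = (1 + M) * ((1 + M) * enorm z ^+ 2) by ring.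
rewrite exprMn; exact: le_trans step1 step2.
Qed.

Lemma grad_growth_of_grad_lipschitz :
  (forall x y, cball 0 rho x -> cball 0 rho y -> enorm (G x - G y) <= enorm (x - y) / r) ->
  enorm (G z) * r <= (M + 1) * enorm z.
Proof.
move=> Glip; have [rho_gt0 [_ [_ [_ [_ [G0 _]]]]]] := chart.
have := Glip z 0; rewrite !cball0E G0 !subr0 enorm0 ler_pdivlMr //.
move=> /(_ (ltW zr) (ltW rho_gt0)) /le_trans; apply.
by rewrite ler_peMl ?enorm_ge0 // lerDr.
Qed.

End GradientGrowth.

Section QuadraticBound.
Variables (R : realType) (n : nat) (Omega : set 'rV[R]_(n + 1)) (rho h r : R).
Variables (phi : 'rV[R]_n -> R) (G : 'rV[R]_n -> 'rV[R]_n).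
Hypotheses (chart : graph_chart Omega (bd Omega) rho h phi G) (r_gt0 : 0 < r).
Hypothesis curvature : cond_L r Omega \/
  (forall x y, cball 0 rho x -> cball 0 rho y -> enorm (G x - G y) <= enorm (x - y) / r).

Lemma graph_quadratic_bound x' : enorm x' < rho ->
  `|phi x'| <= (gmax2 G (enorm x') + 1) / (2 * r) * enorm x' ^+ 2.
Proof.
move=> xr; have [_ [_ [[_ [G_cont gradphi]] [_ [phi0 _]]]]] := chart.
set s := enorm x' in xr *; set M := gmax2 G s.
have s_ge0 : 0 <= s := enorm_ge0 x'.
suff bound t : 0 < t < 1 -> `|dot (G (t *: x')) x'| <= (M + 1) / r * s ^+ 2 * t + 0.
  have := ler_abs_increment_segment gradphi xr bound.
  rewrite phi0 subr0 addr0 => /le_trans; apply.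
  by rewrite le_eqVlt; apply/orP; left; apply/eqP; field; rewrite gt_eqF.
move=> /andP[t0 t1]; rewrite addr0.
have ts : enorm (t *: x') = t * s by rewrite enormZ gtr0_norm.
have ts_le : t * s <= s by rewrite ler_piMl // ltW.
have GM y : enorm y <= enorm (t *: x') -> enorm (G y) ^+ 2 <= M.
  by rewrite /M ts => yt; have := gmax2_ub G_cont s_ge0 (ltW xr) (le_trans yt ts_le).
have tzr : enorm (t *: x') < rho by rewrite ts; exact: le_lt_trans ts_le xr.
have growth : enorm (G (t *: x')) * r <= (M + 1) * enorm (t *: x').
  case: curvature => [condL | Glip].
    exact: grad_growth_of_normal_lipschitz chart r_gt0 tzr GM condL.
  exact: grad_growth_of_grad_lipschitz chart r_gt0 tzr GM Glip.
apply: le_trans (ler_abs_dot _ _) _.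
move: growth; rewrite ts -ler_pdivlMr // => /(ler_wpM2r s_ge0) /le_trans; apply.
by rewrite le_eqVlt; apply/orP; left; apply/eqP; ring.
Qed.

Lemma graph_between_paraboloids (d : R) :
  0 < d -> d <= rho -> d * (gmax2 G rho + 1) <= r ->
  forall y, enorm y < d -> `|phi y| * (2 * d) <= enorm y ^+ 2.
Proof.
move=> d_gt0 drho d_r y yd; have [_ [_ [[_ [G_cont _]] _]]] := chart.
have yr : enorm y < rho := lt_le_trans yd drho.
have My := le_gmax2 G_cont (enorm_ge0 y) (ltW yr) (lexx rho).
have := graph_quadratic_bound yr; rewrite mulrAC ler_pdivlMr ?mulr_gt0 // => quad_y.
have h1 := ler_wpM2l (ltW d_gt0) quad_y.
have h2 : d * ((gmax2 G (enorm y) + 1) * enorm y ^+ 2)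
    <= d * ((gmax2 G rho + 1) * enorm y ^+ 2).
  by rewrite ler_wpM2l ?(ltW d_gt0) // ler_wpM2r ?sqr_ge0 // lerD2r.
have h3 := ler_wpM2r (sqr_ge0 (enorm y)) d_r.
rewrite -(ler_pM2r r_gt0); lra.
Qed.

End QuadraticBound.

Lemma eball_pt_cyl (R : realType) n (rho h c d : R) (y : 'rV[R]_(n + 1)) :
  0 < d -> d <= rho -> d <= h / 2 -> `|c| = d -> eball (pt 0 c) d y ->
  [/\ cyl rho h y, enorm (xp y) < d & enorm (xp y) ^+ 2 + (xN y - c) ^+ 2 < d ^+ 2].
Proof.
rewrite /eball /= -{1}[y]pt_xp ptB subr0 => d_gt0 drho dh cd yd.
have Y2 : enorm (xp y) ^+ 2 + (xN y - c) ^+ 2 < d ^+ 2.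
  by rewrite -sqr_enorm_pt ltr_sqr ?nnegrE ?enorm_ge0 ?(ltW d_gt0).
have yd' : enorm (xp y) < d.
  by rewrite -ltr_sqr ?nnegrE ?enorm_ge0 ?(ltW d_gt0) //; have := sqr_ge0 (xN y - c); lra.
have /andP[yc1 yc2] : - d < xN y - c < d.
  rewrite -ltr_norml -ltr_sqr ?nnegrE ?normr_ge0 ?(ltW d_gt0) // real_normK ?num_real //.
  by have := sqr_ge0 (enorm (xp y)); lra.
split => //; split; first exact: lt_le_trans yd' drho.
have := ler_norm c; have := ler_norm (- c); rewrite normrN cd => c1 c2.
by apply/andP; split; lra.
Qed.

Lemma graph_supporting_balls (R : realType) n (A : set 'rV[R]_(n + 1)) rho h
    (f : 'rV[R]_n -> R) G (d : R) :
  graph_chart A (bd A) rho h f G -> 0 < d -> d <= rho -> d <= h / 2 ->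
  (forall y, enorm y < d -> `|f y| * (2 * d) <= enorm y ^+ 2) ->
  eball (pt 0 (- d)) d `<=` A /\ eball (pt 0 d) d `<=` ~` closure A.
Proof.
move=> chart d_gt0 drho dh flat.
have [_ [_ [_ [_ [_ [_ [Asub bdsub]]]]]]] := chart.
split => y.
- move=> /(eball_pt_cyl d_gt0 drho dh) [|cy /flat fy Y2]; first by rewrite normrN gtr0_norm.
  apply/(Asub y cy).2.
  have := ler_norm (- f (xp y)); rewrite normrN; nra.
- move=> /(eball_pt_cyl d_gt0 drho dh) [|cy /flat fy Y2]; first by rewrite gtr0_norm.
  have f_lt : f (xp y) < xN y by have := ler_norm (f (xp y)); nra.
  move=> clAy; have notA : ~ A y by move=> /(Asub y cy); lra.
  have : bd A y by split => // /interior_subset.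
  by move=> /(bdsub y cy); lra.
Qed.

Unset Implicit Arguments.

Theorem lemma4p1 (R : realType) (n : nat) (Omega : set 'rV[R]_(n + 1))
  (rho h r : R) (phi : 'rV[R]_n -> R) (G : 'rV[R]_n -> 'rV[R]_n) :
  open Omega -> connected Omega -> bd Omega 0 ->
  graph_chart Omega (bd Omega) rho h phi G ->
  0 < r ->
  (cond_L r Omega \/
   (forall x y, cball 0 rho x -> cball 0 rho y ->
      enorm (G x - G y) <= enorm (x - y) / r)) ->
  (forall x', enorm x' < rho ->
     `|phi x'| <= (gmax2 G (enorm x') + 1) / (2 * r) * enorm x' ^+ 2) /\
  (let delta0 := Num.min (r / (gmax2 G rho + 1)) (Num.min rho (h / 2)) in
   eball (pt 0 (- delta0)) delta0 `<=` Omega /\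
   eball (pt 0 delta0) delta0 `<=` ~` closure Omega).
Proof.
move=> _ _ _ chart r_gt0 curvature.
split => [|delta0]; first exact: graph_quadratic_bound chart r_gt0 curvature.
have [rho_gt0 [h_gt0 [[_ [G_cont _]] _]]] := chart.
have M_ge0 := gmax2_ge0 G_cont (ltW rho_gt0) (lexx rho).
have d_gt0 : 0 < delta0 by rewrite !lt_min divr_gt0 ?ltr_wpDl ?rho_gt0 ?divr_gt0.
have d_r : delta0 * (gmax2 G rho + 1) <= r by rewrite -ler_pdivlMr ?ltr_wpDl // ge_min lexx.
have d_rho : delta0 <= rho by rewrite !ge_min lexx orbT.
have d_h : delta0 <= h / 2 by rewrite !ge_min lexx !orbT.
apply: (graph_supporting_balls chart d_gt0 d_rho d_h).
by have := graph_between_paraboloids chart r_gt0 curvature d_gt0 d_rho d_r.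
Qed.
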